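(* Let $X$ be any normed space. Then the rendezvous set $\mathcal{R}(X)$ is nonempty.
   Context: For a normed space $X$ let $S_X=\{x:\|x\|=1\}$ be its unit sphere and use the kernel $k(x,y)=\|x-y\|$. For $n\in\mathbb{N}$, $R_n(S_X):=\bigcap_{w_1,\dots,w_n\in S_X}\overline{\mathrm{conv}}\{\frac1n\sum_{j=1}^n \|x-w_j\|: x\in S_X\}$ (closed convex hull in $\mathbb{R}$, i.e. a closed interval), and $\mathcal{R}(X):=R(S_X):=\bigcap_{n=1}^\infty R_n(S_X)$. *)

From HB Require Import structures.
From mathcomp Require Import all_boot all_order all_algebra.
From mathcomp Require Import all_classical all_reals all_analysis.
Set Implicit Arguments. Unset Strict Implicit. Unset Printing Implicit Defensive.
Import Order.TTheory GRing.Theory Num.Theory.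
Import numFieldNormedType.Exports.
Local Open Scope classical_set_scope.
Local Open Scope ring_scope.

Section Rendezvous.
Variables (R : realType) (X : normedModType R).

Definition unit_sphere : set X := [set x | `|x| = 1].

Definition avg_dist (n : nat) (w : 'I_n -> X) (x : X) : R :=
  n%:R^-1 * \sum_(j < n) `|x - w j|.

Definition convex_setR (C : set R) : Prop :=
  forall a b t, C a -> C b -> 0 <= t -> t <= 1 -> C (t * a + (1 - t) * b).

Definition clconv (A : set R) : set R :=
  \bigcap_(C in [set C : set R | [/\ closed C, convex_setR C & A `<=` C]]) C.

Definition Rn_set (n : nat) : set R :=
  \bigcap_(w in [set w : 'I_n -> X | forall j, unit_sphere (w j)])
     clconv (avg_dist w @` unit_sphere).

Definition rendezvous_set : set R :=
  \bigcap_(n in [set n : nat | (0 < n)%N]) Rn_set n.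

End Rendezvous.

From HB Require Import structures.
From mathcomp Require Import all_boot all_order all_algebra.
From mathcomp Require Import all_classical all_reals all_analysis.
From mathcomp Require Import lra ring.
Set Implicit Arguments. Unset Strict Implicit. Unset Printing Implicit Defensive.
Import numFieldNormedType.Exports.
Import Order.TTheory GRing.Theory Num.Theory.
Local Open Scope classical_set_scope.
Local Open Scope ring_scope.

(** Averaging over two families of unit vectors is symmetric:
    [(1/m) sum_k avg_dist w (v k) = (1/n) sum_j avg_dist v (w j)].  Hence the
    infimum of [avg_dist w] on the sphere never exceeds the supremum of
    [avg_dist v], for any two families [w], [v].  The supremum of all these
    infima therefore lies between the infimum and the supremum of every range
    [avg_dist v @` S_X], hence in its closed convex hull. *)

Section Mean.
Variable R : numFieldType.

Lemma mean_ge_lbound (n : nat) (F : 'I_n -> R) (c : R) : (0 < n)%N ->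
  (forall k, c <= F k) -> c <= n%:R^-1 * \sum_(k < n) F k.
Proof.
move=> n_gt0 cF; rewrite ler_pdivlMl ?ltr0n //.
apply: (@le_trans _ _ (\sum_(k < n) c)).
  by rewrite sumr_const card_ord mulr_natl.
by apply: ler_sum => k _; exact: cF.
Qed.

Lemma mean_le_ubound (n : nat) (F : 'I_n -> R) (c : R) : (0 < n)%N ->
  (forall k, F k <= c) -> n%:R^-1 * \sum_(k < n) F k <= c.
Proof.
move=> n_gt0 Fc; rewrite ler_pdivrMl ?ltr0n //.
apply: (@le_trans _ _ (\sum_(k < n) c)).
  by apply: ler_sum => k _; exact: Fc.
by rewrite sumr_const card_ord mulr_natl.
Qed.

End Mean.

Section ConvexHull.
Variable R : realType.

Lemma convex_setR_between (C : set R) (a b t : R) : convex_setR C ->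
  C a -> C b -> a <= t -> t <= b -> C t.
Proof.
move=> Cconv Ca Cb at_ tb.
have [a_eq_b|ab] := eqVneq a b.
  by rewrite (_ : t = a) //; apply/le_anti; rewrite at_ a_eq_b tb.
have ba_neq0 : b - a != 0 by rewrite subr_eq0 eq_sym.
have -> : t = (b - t) / (b - a) * a + (1 - (b - t) / (b - a)) * b by field.
apply: Cconv => //; first by rewrite divr_ge0 ?subr_ge0 // (le_trans at_).
by rewrite ler_pdivrMr ?subr_gt0 ?lt_neqAle ?ab ?(le_trans at_) // mul1r lerD2l lerN2.
Qed.

Lemma clconv_inf_sup (A : set R) (t : R) : A !=set0 ->
  has_lbound A -> has_ubound A -> inf A <= t -> t <= sup A -> clconv A t.
Proof.
move=> A0 Alb Aub inf_t t_sup C [Cclosed Cconv AC].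
apply: Cclosed => B /nbhs_ballP[e /= e_gt0 eB].
have [a Aa a_inf] := inf_adherent e_gt0 (conj A0 Alb).
have [b Ab b_sup] := sup_adherent e_gt0 (conj A0 Aub).
have inf_a : inf A <= a by exact: ge_inf.
have b_sup' : b <= sup A by exact: sup_upper_bound.
have [ta|at_] := ltP t a.
  exists a; split; first exact: AC.
  by apply: eB; rewrite -ball_normE /= distrC ger0_norm; lra.
have [bt|tb] := ltP b t.
  exists b; split; first exact: AC.
  by apply: eB; rewrite -ball_normE /= ger0_norm; lra.
exists t; split; last exact/eB/ballxx.
exact: (convex_setR_between Cconv (AC _ Aa) (AC _ Ab)).
Qed.

End ConvexHull.

Section AverageDistance.
Variables (R : realType) (X : normedModType R).
Local Notation S := (@unit_sphere R X).

Lemma avg_dist_ge0 n (w : 'I_n -> X) x : 0 <= avg_dist w x.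
Proof. by rewrite mulr_ge0 ?invr_ge0 ?ler0n ?sumr_ge0. Qed.

Lemma avg_dist_le2 n (w : 'I_n -> X) x : (0 < n)%N ->
  (forall j, S (w j)) -> S x -> avg_dist w x <= 2.
Proof.
move=> n_gt0 Sw Sx; apply: mean_le_ubound => // j.
by rewrite (le_trans (ler_normB _ _)) // Sx Sw.
Qed.

Lemma mean_avg_distC n m (w : 'I_n -> X) (v : 'I_m -> X) :
  m%:R^-1 * \sum_(k < m) avg_dist w (v k) =
  n%:R^-1 * \sum_(j < n) avg_dist v (w j).
Proof.
rewrite /avg_dist -!big_distrr /= !mulrA [n%:R^-1 * _]mulrC.
congr (_ * _); rewrite exchange_big /=; apply: eq_bigr => j _.
by apply: eq_bigr => k _; rewrite distrC.
Qed.

Lemma avg_dist_range_lbound n (w : 'I_n -> X) :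
  has_lbound (avg_dist w @` S).
Proof. by exists 0 => _ [x _ <-]; exact: avg_dist_ge0. Qed.

Lemma avg_dist_range_ubound n (w : 'I_n -> X) : (0 < n)%N ->
  (forall j, S (w j)) -> has_ubound (avg_dist w @` S).
Proof. by move=> n_gt0 Sw; exists 2 => _ [x Sx <-]; exact: avg_dist_le2. Qed.

Lemma inf_avg_dist_le_sup n m (w : 'I_n -> X) (v : 'I_m -> X) :
  (0 < n)%N -> (0 < m)%N -> (forall j, S (w j)) -> (forall k, S (v k)) ->
  inf (avg_dist w @` S) <= sup (avg_dist v @` S).
Proof.
move=> n_gt0 m_gt0 Sw Sv.
apply: (@le_trans _ _ (m%:R^-1 * \sum_(k < m) avg_dist w (v k))).
  apply: mean_ge_lbound => // k; apply: ge_inf; last by exists (v k).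
  exact: avg_dist_range_lbound.
rewrite mean_avg_distC; apply: mean_le_ubound => // j.
apply: sup_upper_bound; last by exists (w j).
split; first by exists (avg_dist v (w j)), (w j).
exact: avg_dist_range_ubound.
Qed.

Definition avg_dist_infima : set R :=
  [set y | exists n (w : 'I_n -> X),
    [/\ (0 < n)%N, forall j, S (w j) & y = inf (avg_dist w @` S)]].

Lemma avg_dist_infima_le_sup m (v : 'I_m -> X) : (0 < m)%N ->
  (forall k, S (v k)) -> ubound avg_dist_infima (sup (avg_dist v @` S)).
Proof.
by move=> m_gt0 Sv _ [n [w [n_gt0 Sw ->]]]; exact: inf_avg_dist_le_sup.
Qed.

End AverageDistance.

Theorem corollary2p3 (R : realType) (X : normedModType R) :
  rendezvous_set X !=set0.
Proof.
exists (sup (avg_dist_infima X)) => m /= m_gt0 v /= Sv.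
have infima_ne : avg_dist_infima X !=set0.
  by exists (inf (avg_dist v @` @unit_sphere R X)), m, v.
have infima_sup : has_sup (avg_dist_infima X).
  split; first exact: infima_ne.
  by exists (sup (avg_dist v @` @unit_sphere R X)); exact: avg_dist_infima_le_sup.
apply: clconv_inf_sup.
- by exists (avg_dist v (v (Ordinal m_gt0))), (v (Ordinal m_gt0)).
- exact: avg_dist_range_lbound.
- exact: avg_dist_range_ubound.
- by apply: sup_upper_bound => //; exists m, v.
- exact: ge_sup infima_ne (avg_dist_infima_le_sup m_gt0 Sv).
Qed.
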